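(* Let $S$ be a finite relational signature and let $M=\{(\phi_1,w_1),\ldots,(\phi_h,w_h)\}$ be a Markov logic network over $S$ such that for each $i$, any two atoms appearing in $\phi_i$ contain exactly the same variables. Then the family $\{Q^{(n)}\mid n\in\mathbb{N}\}$ of distributions defined by $M$ is a projective random relational structure model.
   Context: A relational signature $S$ is a set of relation symbols with arities, written $r/k$. For $n\in\mathbb{N}$ let $[n]=\{0,\ldots,n-1\}$ and let $\Omega^{(n)}$ be the set of possible worlds for $S$ over domain $[n]$, i.e. truth assignments to all ground atoms $r(\mathbf{i})$, $r/k\in S$, $\mathbf{i}\in[n]^k$. A random relational structure model (RRSM) is a family $\{Q^{(n)}\mid n\in\mathbb{N}\}$ with $Q^{(n)}$ a probability distribution on $\Omega^{(n)}$. $Q^{(n)}$ is exchangeable if $Q^{(n)}(\omega)=Q^{(n)}(\omega')$ whenever $\omega,\omega'$ are isomorphic. For $m\le n$, $Q^{(n)}\downarrow[m]$ is the marginal distribution of $Q^{(n)}$ on the ground atoms with all arguments in $[m]$ (a distribution on $\Omega^{(m)}$). An RRSM is projective if every $Q^{(n)}$ is exchangeable and $Q^{(n)}\downarrow[m]=Q^{(m)}$ for all $m<n$. A Markov logic network (MLN) is a finite set of pairs $(\phi_i,w_i)$ where $w_i\in\mathbb{R}$ and $\phi_i(X_1,\ldots,X_{k_i})$ is a quantifier-free formula built with Boolean connectives from atoms $r(Y_1,\ldots,Y_l)$, $r/l\in S$, whose arguments are variables among $X_1,\ldots,X_{k_i}$ (no domain constants). For $\omega\in\Omega^{(n)}$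 let $n_i(\omega)$ be the number of tuples $\mathbf{j}\in[n]^{k_i}$ such that $\phi_i(\mathbf{j})$ is true in $\omega$. The MLN defines $Q^{(n)}(\omega)=\frac{1}{Z_n}\exp\big(\sum_i w_i n_i(\omega)\big)$, with $Z_n$ the normalizing constant. *)

From HB Require Import structures.
From mathcomp Require Import all_boot all_order all_algebra all_fingroup.
From mathcomp Require Import all_classical all_reals.
From mathcomp Require Import sequences exp.
Set Implicit Arguments. Unset Strict Implicit. Unset Printing Implicit Defensive.
Import Order.TTheory GRing.Theory Num.Theory.
Local Open Scope ring_scope.

(* A finite relational signature is given by the list of arities of its
   relation symbols; the symbols are the indices 'I_(size S). *)
Definition signature := seq nat.
Definition rel (S : signature) := 'I_(size S).
Definition arity (S : signature) (r : rel S) : nat := nth 0%N S r.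

(* Ground atoms r(i) over domain [n] (= 'I_n).  With n := k this also
   represents atoms r(X_...) over the variables X_0..X_{k-1}. *)
Definition atom (S : signature) (n : nat) : finType :=
  {r : rel S & (arity r).-tuple 'I_n}.

Definition world (S : signature) (n : nat) : finType := {ffun atom S n -> bool}.

Inductive formula (S : signature) (k : nat) : Type :=
  | FAtom (r : rel S) of (arity r).-tuple 'I_k
  | FTrue
  | FFalse
  | FNot of formula S k
  | FAnd of formula S k & formula S k
  | FOr of formula S k & formula S k
  | FImp of formula S k & formula S k
  | FIff of formula S k & formula S k.

Fixpoint atoms (S : signature) (k : nat) (phi : formula S k) : seq (atom S k) :=
  match phi with
  | FAtom r a => [:: Tagged (fun r => (arity r).-tuple 'I_k) a]
  | FTrue | FFalse => [::]
  | FNot p => atoms p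
  | FAnd p q | FOr p q | FImp p q | FIff p q => atoms p ++ atoms q
  end.

Fixpoint holds (S : signature) (k n : nat) (phi : formula S k)
    (w : world S n) (j : k.-tuple 'I_n) : bool :=
  match phi with
  | FAtom r a => w (Tagged (fun r => (arity r).-tuple 'I_n) (map_tuple (tnth j) a))
  | FTrue => true
  | FFalse => false
  | FNot p => ~~ holds p w j
  | FAnd p q => holds p w j && holds q w j
  | FOr p q => holds p w j || holds q w j
  | FImp p q => holds p w j ==> holds q w j
  | FIff p q => holds p w j == holds q w j
  end.

Definition nsat (S : signature) (k n : nat) (phi : formula S k) (w : world S n) : nat :=
  #|[set j : k.-tuple 'I_n | holds phi w j]|.

Record wformula (S : signature) (R : realType) := WFormula {
  wf_k : nat;
  wf_phi : formula S wf_k;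
  wf_w : R }.

Definition MLN (S : signature) (R : realType) := seq (wformula S R).

Definition mln_weight (S : signature) (R : realType) (M : MLN S R) (n : nat)
    (w : world S n) : R :=
  expR (\sum_(c <- M) wf_w c * (nsat (wf_phi c) w)%:R).

Definition mln_Z (S : signature) (R : realType) (M : MLN S R) (n : nat) : R :=
  \sum_(w : world S n) mln_weight M w.

Definition mln_dist (S : signature) (R : realType) (M : MLN S R) (n : nat)
    (w : world S n) : R :=
  mln_weight M w / mln_Z M n.

Definition RRSM (S : signature) (R : realType) := forall n : nat, world S n -> R.

Definition is_distribution (S : signature) (R : realType) (n : nat)
    (P : world S n -> R) : Prop :=
  (forall w, 0 <= P w) /\ \sum_(w : world S n) P w = 1.

Definition isomorphic (S : signature) (n : nat) (w w' : world S n) : Prop :=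
  exists pi : {perm 'I_n}, forall (r : rel S) (a : (arity r).-tuple 'I_n),
    w (Tagged (fun r => (arity r).-tuple 'I_n) a)
    = w' (Tagged (fun r => (arity r).-tuple 'I_n) (map_tuple pi a)).

Definition exchangeable (S : signature) (R : realType) (n : nat)
    (P : world S n -> R) : Prop :=
  forall w w' : world S n, isomorphic w w' -> P w = P w'.

Definition restrict (S : signature) (m n : nat) (H : (m <= n)%N)
    (w : world S n) : world S m :=
  [ffun a : atom S m =>
     w (Tagged (fun r => (arity r).-tuple 'I_n) (map_tuple (widen_ord H) (tagged a)))].

Definition marginal (S : signature) (R : realType) (m n : nat) (H : (m <= n)%N)
    (P : world S n -> R) (v : world S m) : R :=
  \sum_(w : world S n | restrict H w == v) P w.

Definition projective (S : signature) (R : realType) (Q : RRSM S R) : Prop :=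
  (forall n, is_distribution (Q n)) /\
  (forall n, exchangeable (Q n)) /\
  (forall (m n : nat) (H : (m <= n)%N), (m < n)%N ->
     forall v : world S m, marginal H (Q n) v = Q m v).

(* Hypotheses on an MLN formula phi(X_0..X_{k-1}):
   - same_vars: any two atoms of phi contain exactly the same variables;
   - all_vars_occur: the variables X_0..X_{k-1} of phi are those occurring in it. *)
Definition same_vars (S : signature) (k : nat) (phi : formula S k) : Prop :=
  forall a b : atom S k, a \in atoms phi -> b \in atoms phi ->
    forall x : 'I_k, (x \in tagged a) = (x \in tagged b).

Definition all_vars_occur (S : signature) (k : nat) (phi : formula S k) : Prop :=
  forall x : 'I_k, exists2 a, a \in atoms phi & x \in tagged a.

From Pilot Require Import Defs.
From mathcomp Require Import all_boot all_order all_algebra all_fingroup.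
From mathcomp Require Import all_classical all_reals.
From mathcomp Require Import sequences exp.
Set Implicit Arguments. Unset Strict Implicit. Unset Printing Implicit Defensive.
Import Order.TTheory GRing.Theory Num.Theory.
Local Open Scope ring_scope.

(* Fix m <= n.  A tuple j over [n] either lies in [m]^k, and then phi(j) is
   evaluated in the restriction of w to [m], or has an entry outside [m]; in
   the latter case, since every atom of phi mentions every variable, every
   ground atom of phi(j) has an argument outside [m].  Hence n_i(w) splits as
   n_i(w|[m]) plus a count depending only on the atoms not over [m], and
   exp(sum_i w_i n_i(w)) = exp(sum_i w_i n_i(w|[m])) * h(w) with h blind to
   the atoms over [m].  Replacing the atoms over [m] is a bijection between
   the fibres of the restriction map, so the fibre sums of h are all equal to
   one constant C: the weight of the fibre of v is weight(v) * C,
   Z_n = Z_m * C, and the marginal of Q^(n) on [m] is Q^(m).  Exchangeability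
   holds because n_i is invariant under relabelling the domain. *)

Lemma map_tuple_inj (T U : Type) (k : nat) (f : T -> U) :
  injective f -> injective (@map_tuple k T U f).
Proof. by move=> f_inj s t /(congr1 val)/(inj_map f_inj)/val_inj. Qed.

Lemma widen_ord_inj m n (le_mn : (m <= n)%N) : injective (widen_ord le_mn).
Proof. by move=> i j /(congr1 val) /= /val_inj. Qed.

Section Semantics.
Variable S : signature.

Definition ground_atom k n (j : k.-tuple 'I_n) (a : atom S k) : atom S n :=
  Tagged (fun r => (arity r).-tuple 'I_n) (map_tuple (tnth j) (tagged a)).

Lemma holds_relabel k n n' (f : 'I_n -> 'I_n') (phi : formula S k)
    (w : world S n) (w' : world S n') (j : k.-tuple 'I_n) :
  (forall (r : Defs.rel S) (a : (arity r).-tuple 'I_n),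
     w (Tagged (fun r => (arity r).-tuple 'I_n) a)
     = w' (Tagged (fun r => (arity r).-tuple 'I_n') (map_tuple f a))) ->
  holds phi w j = holds phi w' (map_tuple f j).
Proof.
move=> ww'; elim: phi => [r a||| p IHp | p IHp q IHq | p IHp q IHq
                         | p IHp q IHq | p IHp q IHq] /=; rewrite ?IHp ?IHq //.
rewrite ww'; congr (w' (Tagged _ _)).
by apply: eq_from_tnth => x; rewrite !tnth_map.
Qed.

Lemma eq_holds_atoms k n (phi : formula S k) (w1 w2 : world S n)
    (j : k.-tuple 'I_n) :
  (forall a, a \in atoms phi -> w1 (ground_atom j a) = w2 (ground_atom j a)) ->
  holds phi w1 j = holds phi w2 j.
Proof.
elim: phi => [r a||| p IHp | p IHp q IHq | p IHp q IHq
             | p IHp q IHq | p IHp q IHq] /= w12; rewrite ?IHp ?IHq //;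
  try by move=> a a_phi; apply: w12; rewrite mem_cat a_phi ?orbT.
exact: w12 (mem_head _ _).
Qed.

Lemma nsat_isomorphic k n (phi : formula S k) (w w' : world S n) :
  isomorphic w w' -> nsat phi w = nsat phi w'.
Proof.
case=> pi ww'; have pi_inj := @map_tuple_inj _ _ k _ (@perm_inj _ pi).
rewrite /nsat -[in RHS](card_preimset _ pi_inj); apply: eq_card => j.
by rewrite !inE; apply: holds_relabel.
Qed.

End Semantics.

Section Restriction.
Variables (S : signature) (m n : nat) (le_mn : (m <= n)%N).

Definition widen_atom (b : atom S m) : atom S n :=
  Tagged (fun r => (arity r).-tuple 'I_n) (map_tuple (widen_ord le_mn) (tagged b)).

Lemma widen_atom_inj : injective widen_atom.
Proof.
move=> [r a] [r' a'] eq_aa'; have eq_rr' : r = r' := congr1 tag eq_aa'; subst r'.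
move/eqP: eq_aa'; rewrite eq_Tagged /= => /eqP.
by move/(map_tuple_inj (@widen_ord_inj _ _ le_mn)) ->.
Qed.

Lemma restrictE (w : world S n) b : Defs.restrict le_mn w b = w (widen_atom b).
Proof. by rewrite ffunE. Qed.

Definition inside k (j : k.-tuple 'I_n) := all (fun i : 'I_n => (i < m)%N) j.

(* [glue v w] takes the atoms over [m] from v and all the others from w. *)
Definition glue (v : world S m) (w : world S n) : world S n :=
  [ffun a => if [pick b | widen_atom b == a] is Some b then v b else w a].

Lemma restrict_glue v w : Defs.restrict le_mn (glue v w) = v.
Proof.
apply/ffunP => b; rewrite restrictE ffunE.
by case: pickP => [b' /eqP/widen_atom_inj -> // | /(_ b)]; rewrite eqxx.
Qed.

Lemma glueA v v' w : glue v (glue v' w) = glue v w.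
Proof.
by apply/ffunP => a; rewrite !ffunE; case: pickP => // _; rewrite ffunE; case: pickP.
Qed.

Lemma glue_restrict w : glue (Defs.restrict le_mn w) w = w.
Proof.
by apply/ffunP => a; rewrite ffunE; case: pickP => // b /eqP <-; rewrite restrictE.
Qed.

Lemma glue_fixed v w : (glue v w == w) = (Defs.restrict le_mn w == v).
Proof. by apply/eqP/eqP => [<- | <-]; rewrite ?restrict_glue ?glue_restrict. Qed.

Lemma glue_outside v w (a : atom S n) :
  ~~ inside (tagged a) -> glue v w a = w a.
Proof.
move=> a_out; rewrite ffunE; case: pickP => // b /eqP eq_ba.
case/negP: a_out; rewrite -eq_ba; apply/allP => _ /mapP[x _ ->] /=.
exact: ltn_ord.
Qed.

Lemma sum_fibre_glue_invariant (R : nmodType) (h : world S n -> R) v v' :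
  (forall v w, h (glue v w) = h w) ->
  \sum_(w | Defs.restrict le_mn w == v) h w = \sum_(w | Defs.restrict le_mn w == v') h w.
Proof.
move=> h_glue; rewrite (reindex_onto (glue v) (glue v')) /=; last first.
  by move=> w /eqP <-; rewrite glueA glue_restrict.
apply: eq_big => [w | w _]; last exact: h_glue.
by rewrite restrict_glue eqxx glueA glue_fixed.
Qed.

Definition nsat_outside k (phi : formula S k) (w : world S n) :=
  #|[set j : k.-tuple 'I_n | holds phi w j & ~~ inside j]|.

Lemma insideP k (j : k.-tuple 'I_n) :
  reflect (exists j', j = map_tuple (widen_ord le_mn) j') (inside j).
Proof.
apply: (iffP allP) => [j_in | [j' ->] _ /mapP[x _ ->] /=]; last exact: ltn_ord.
have lt_jm x : (tnth j x < m)%N by apply/j_in/mem_tnth.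
exists [tuple Ordinal (lt_jm x) | x < k].
by apply: eq_from_tnth => x; rewrite tnth_map tnth_mktuple; apply: val_inj.
Qed.

Lemma holds_restrict k (phi : formula S k) w (j : k.-tuple 'I_m) :
  holds phi (Defs.restrict le_mn w) j = holds phi w (map_tuple (widen_ord le_mn) j).
Proof. by apply: holds_relabel => r a; rewrite ffunE. Qed.

Lemma nsat_restrict k (phi : formula S k) w :
  nsat phi (Defs.restrict le_mn w) = #|[set j | holds phi w j & inside j]|.
Proof.
have widen_inj := @map_tuple_inj _ _ k _ (@widen_ord_inj _ _ le_mn).
rewrite /nsat -(card_imset _ widen_inj); apply: eq_card => j; rewrite !inE.
apply/imsetP/andP => [[j' j'_sat ->] | [j_sat /insideP[j' eq_j]]].
  by rewrite inE holds_restrict in j'_sat; split=> //; apply/insideP; exists j'.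
by exists j' => //; rewrite inE holds_restrict -eq_j.
Qed.

Lemma nsat_restrict_split k (phi : formula S k) w :
  nsat phi w = (nsat phi (Defs.restrict le_mn w) + nsat_outside phi w)%N.
Proof.
rewrite nsat_restrict /nsat /nsat_outside -(cardsID [set j | inside j]).
by congr (_ + _)%N; apply: eq_card => j; rewrite !inE // andbC.
Qed.

Lemma nsat_outside_glue k (phi : formula S k) v w :
  same_vars phi -> all_vars_occur phi ->
  nsat_outside phi (glue v w) = nsat_outside phi w.
Proof.
move=> phi_same phi_all; apply: eq_card => j; rewrite !inE.
case j_in: (inside j); rewrite ?andbF ?andbT //.
apply: eq_holds_atoms => a a_phi; apply: glue_outside.
case/allPn: (negbT j_in) => i /tnthP[x ->] le_mi.
have [b b_phi x_b] := phi_all x.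
have x_a : x \in tagged a by rewrite (phi_same a b).
by apply/allPn; exists (tnth j x) => //; apply: map_f.
Qed.

End Restriction.

Section MarkovLogicNetwork.
Variables (S : signature) (R : realType) (M : MLN S R).

Lemma mln_weight_gt0 n (w : world S n) : 0 < mln_weight M w.
Proof. exact: expR_gt0. Qed.

Lemma mln_Z_gt0 n : 0 < mln_Z M n.
Proof.
rewrite /mln_Z (bigD1 [ffun=> false]) //= ltr_wpDr ?mln_weight_gt0 //.
by apply: sumr_ge0 => w _; apply/ltW/mln_weight_gt0.
Qed.

Lemma mln_dist_distribution n : is_distribution (@mln_dist S R M n).
Proof.
split=> [w | ]; first by rewrite divr_ge0 ?ltW ?mln_weight_gt0 ?mln_Z_gt0.
by rewrite -big_distrl /= divff // gt_eqF ?mln_Z_gt0.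
Qed.

Lemma mln_weight_isomorphic n (w w' : world S n) :
  isomorphic w w' -> mln_weight M w = mln_weight M w'.
Proof.
move=> iso_ww'; congr expR; apply: eq_bigr => c _.
by rewrite (nsat_isomorphic _ iso_ww').
Qed.

Lemma mln_dist_exchangeable n : exchangeable (@mln_dist S R M n).
Proof. by move=> w w' /mln_weight_isomorphic; rewrite /mln_dist => ->. Qed.

Variables (m n : nat) (le_mn : (m <= n)%N).

Definition outside_weight (w : world S n) : R :=
  expR (\sum_(c <- M) wf_w c * (nsat_outside m (wf_phi c) w)%:R).

Lemma mln_weight_restrict_split w :
  mln_weight M w = mln_weight M (Defs.restrict le_mn w) * outside_weight w.
Proof.
rewrite /mln_weight /outside_weight -expRD -big_split /=; congr expR.
by apply: eq_bigr => c _; rewrite (nsat_restrict_split le_mn) natrD mulrDr.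
Qed.

Hypothesis M_local : forall i : 'I_(size M),
  same_vars (wf_phi (tnth (in_tuple M) i)) /\
  all_vars_occur (wf_phi (tnth (in_tuple M) i)).

Lemma outside_weight_glue v w : outside_weight (glue le_mn v w) = outside_weight w.
Proof.
rewrite /outside_weight !(big_tuple _ _ (in_tuple M)); congr expR.
by apply: eq_bigr => i _; have [? ?] := M_local i; rewrite nsat_outside_glue.
Qed.

Lemma mln_weight_fibre v v' :
  \sum_(w | Defs.restrict le_mn w == v) mln_weight M w
  = mln_weight M v * \sum_(w | Defs.restrict le_mn w == v') outside_weight w.
Proof.
rewrite -(sum_fibre_glue_invariant v v' outside_weight_glue) big_distrr /=.
by apply: eq_bigr => w /eqP <-; rewrite mln_weight_restrict_split.
Qed.

Lemma mln_Z_fibre v' :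
  mln_Z M n = mln_Z M m * \sum_(w | Defs.restrict le_mn w == v') outside_weight w.
Proof.
rewrite /mln_Z (partition_big (Defs.restrict le_mn) xpredT) //= big_distrl /=.
by apply: eq_bigr => v _; rewrite (mln_weight_fibre v v').
Qed.

Lemma mln_dist_marginal v : marginal le_mn (@mln_dist S R M n) v = mln_dist M v.
Proof.
rewrite /marginal /mln_dist -big_distrl /= (mln_weight_fibre v v) (mln_Z_fibre v).
set C := \sum_(w | _) _; have C_neq0 : C != 0.
  by apply: contraTneq (mln_Z_gt0 n) => C0; rewrite (mln_Z_fibre v) -/C C0 mulr0 ltxx.
by rewrite invfM mulrACA divff // mulr1.
Qed.

End MarkovLogicNetwork.

Theorem mainTheorem2 (S : signature) (R : realType) (M : MLN S R) :
  (forall i : 'I_(size M),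
     same_vars (wf_phi (tnth (in_tuple M) i)) /\
     all_vars_occur (wf_phi (tnth (in_tuple M) i))) ->
  projective (fun n => @mln_dist S R M n).
Proof.
move=> M_local; split; [exact: mln_dist_distribution | split].
  exact: mln_dist_exchangeable.
by move=> m n le_mn _; apply: mln_dist_marginal.
Qed.
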